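(* Let $\mathcal P=\mathcal P_n(\alpha,\ell)$ be a quasi-regular curvilinear $n$-gon (all interior angles equal to $\alpha$, all side lengths equal to $\ell$) with $\alpha\in(0,\pi)\setminus\mathcal E$. Then the set of its quasi-eigenvalues (as a set of values, without multiplicity) is $$\Big\{\tfrac1\ell\Big(\pm\arccos\big(\sin(\tfrac{\pi^2}{2\alpha})\cos(\tfrac{2\pi q}{n})\big)+2\pi m\Big):\ m\in\mathbb N\cup\{0\},\ q=0,1,\dots,\lfloor n/2\rfloor\Big\}\cap[0,+\infty).$$ Each such quasi-eigenvalue has multiplicity two, except in the following cases, where it has multiplicity one: (i) $\alpha\notin\mathcal S$ and $q=0$; (ii) $\alpha\notin\mathcal S$, $n$ even and $q=n/2$; (iii) $\alpha\in\mathcal S$ even, $q=0$ and $m=0$ (the quasi-eigenvalue $0$); (iv) $\alpha\in\mathcal S$ odd, $n$ even, $q=n/2$ and $m=0$ (the quasi-eigenvalue $0$).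
   Context: $\mathcal E=\{\pi/(2k):k\in\mathbb N\}$ (exceptional angles), $\mathcal S=\{\pi/(2k+1):k\in\mathbb N\}$ (special angles); a special angle $\pi/(2k+1)$ is called even or odd according as $k$ is even or odd. A curvilinear polygon $\mathcal P(\boldsymbol\alpha,\boldsymbol\ell)$: bounded simply connected planar domain bounded by $n$ smooth arcs of lengths $\ell_j$, vertices $V_1,\dots,V_n$ clockwise, interior angle $\alpha_j\in(0,\pi)$ at $V_j$. For $\alpha\notin\mathcal E$, $\mathtt A(\alpha)=\begin{pmatrix}\csc\frac{\pi^2}{2\alpha}&-i\cot\frac{\pi^2}{2\alpha}\\ i\cot\frac{\pi^2}{2\alpha}&\csc\frac{\pi^2}{2\alpha}\end{pmatrix}$, $\mathtt B(\ell,\sigma)=\operatorname{diag}(e^{i\ell\sigma},e^{-i\ell\sigma})$. For a polygon without exceptional angles, $\sigma\ge0$ is a quasi-eigenvalue iff $1$ is an eigenvalue of $\mathtt T(\sigma)=\mathtt A(\alpha_n)\mathtt B(\ell_n,\sigma)\cdots\mathtt A(\alpha_1)\mathtt B(\ell_1,\sigma)$; the multiplicity of a quasi-eigenvalue $\sigma>0$ is the geometric multiplicity of the eigenvalue $1$ of $\mathtt T(\sigma)$, and the quasi-eigenvalue $0$ (if present) has multiplicity $1$. *)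

From Stdlib Require Import Reals Lra Lia List.
Open Scope R_scope.

Definition C : Type := (R * R)%type.
Definition Cre (z : C) : R := fst z.
Definition Cim (z : C) : R := snd z.
Definition C0 : C := (0, 0).
Definition C1 : C := (1, 0).
Definition RtoC (x : R) : C := (x, 0).
Definition Cadd (z w : C) : C := (fst z + fst w, snd z + snd w).
Definition Cmul (z w : C) : C :=
  (fst z * fst w - snd z * snd w, fst z * snd w + snd z * fst w).
Definition Ci : C := (0, 1).
Definition Cexpi (t : R) : C := (cos t, sin t).

Record M2 : Type := mkM2 { m11 : C; m12 : C; m21 : C; m22 : C }.
Definition V2 : Type := (C * C)%type.

Definition M2mul (X Y : M2) : M2 :=
  mkM2 (Cadd (Cmul (m11 X) (m11 Y)) (Cmul (m12 X) (m21 Y)))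
       (Cadd (Cmul (m11 X) (m12 Y)) (Cmul (m12 X) (m22 Y)))
       (Cadd (Cmul (m21 X) (m11 Y)) (Cmul (m22 X) (m21 Y)))
       (Cadd (Cmul (m21 X) (m12 Y)) (Cmul (m22 X) (m22 Y))).
Definition M2id : M2 := mkM2 C1 C0 C0 C1.
Definition M2app (X : M2) (v : V2) : V2 :=
  (Cadd (Cmul (m11 X) (fst v)) (Cmul (m12 X) (snd v)),
   Cadd (Cmul (m21 X) (fst v)) (Cmul (m22 X) (snd v))).
Definition V2zero : V2 := (C0, C0).
Definition V2add (v w : V2) : V2 := (Cadd (fst v) (fst w), Cadd (snd v) (snd w)).
Definition V2scale (a : C) (v : V2) : V2 := (Cmul a (fst v), Cmul a (snd v)).

Definition exceptional (a : R) : Prop :=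
  exists k : nat, (1 <= k)%nat /\ a = PI / (2 * INR k).
Definition special (a : R) : Prop :=
  exists k : nat, (1 <= k)%nat /\ a = PI / (2 * INR k + 1).
Definition special_even (a : R) : Prop :=
  exists k : nat, (1 <= k)%nat /\ Nat.Even k /\ a = PI / (2 * INR k + 1).
Definition special_odd (a : R) : Prop :=
  exists k : nat, (1 <= k)%nat /\ Nat.Odd k /\ a = PI / (2 * INR k + 1).

Definition csc (x : R) : R := 1 / sin x.
Definition cot (x : R) : R := cos x / sin x.
Definition Amat (a : R) : M2 :=
  let t := PI ^ 2 / (2 * a) in
  mkM2 (RtoC (csc t)) (0, - cot t) (0, cot t) (RtoC (csc t)).
Definition Bmat (l s : R) : M2 :=
  mkM2 (Cexpi (l * s)) C0 C0 (Cexpi (- (l * s))).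

(** T(s) = A(alpha_n) B(l_n,s) ... A(alpha_1) B(l_1,s), for the list of
    vertex data [(alpha_1,l_1); ...; (alpha_n,l_n)]. *)
Definition Tmat (data : list (R * R)) (s : R) : M2 :=
  fold_left (fun acc p => M2mul (M2mul (Amat (fst p)) (Bmat (snd p) s)) acc)
            data M2id.

Definition eig1 (X : M2) : Prop :=
  exists v : V2, v <> V2zero /\ M2app X v = v.
Definition lin_indep (v w : V2) : Prop :=
  forall a b : C, V2add (V2scale a v) (V2scale b w) = V2zero -> a = C0 /\ b = C0.
Definition two_indep_fixed (X : M2) : Prop :=
  exists v w : V2, lin_indep v w /\ M2app X v = v /\ M2app X w = w.
Definition geom_mult1 (X : M2) (k : nat) : Prop :=
  match k with
  | 0%nat => ~ eig1 X
  | 1%nat => eig1 X /\ ~ two_indep_fixed X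
  | 2%nat => two_indep_fixed X
  | _ => False
  end.

(** Quasi-eigenvalues of a polygon without exceptional angles. *)
Definition quasi_eig (data : list (R * R)) (s : R) : Prop :=
  0 <= s /\ eig1 (Tmat data s).
Definition qe_mult (data : list (R * R)) (s : R) (k : nat) : Prop :=
  quasi_eig data s /\
  (s = 0 -> k = 1%nat) /\ (0 < s -> geom_mult1 (Tmat data s) k).

Definition qreg (n : nat) (a l : R) : list (R * R) := repeat (a, l) n.

Definition qreg_value (n : nat) (a l : R) (sgn : R) (m q : nat) : R :=
  / l * (sgn * acos (sin (PI ^ 2 / (2 * a)) * cos (2 * PI * INR q / INR n))
         + 2 * PI * INR m).

Definition mult_one_case (n : nat) (a : R) (m q : nat) : Prop :=
  (~ special a /\ q = 0%nat) \/
  (~ special a /\ Nat.Even n /\ q = (n / 2)%nat) \/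
  (special_even a /\ q = 0%nat /\ m = 0%nat) \/
  (special_odd a /\ Nat.Even n /\ q = (n / 2)%nat /\ m = 0%nat).

From Pilot Require Import Defs.
From Stdlib Require Import Reals Lra Lia List ZArith Classical.
From Coquelicot Require Import Complex.
Open Scope R_scope.

(** For the quasi-regular n-gon every factor of the transfer matrix is the
    same vertex matrix [X = A(a) B(l, s)], so [T(s) = X ^ n].  The matrix [X]
    has determinant [csc^2 t - cot^2 t = 1] (with [t = PI^2 / (2 a)]) and real
    trace [2 tau], [tau = csc t * cos (l s)].  By Cayley-Hamilton its powers
    are [X ^ n = T_n(tau) I + U_n(tau) (X - tau I)] with Chebyshev
    polynomials [T_n], [U_n], whence
    - 1 is an eigenvalue of [X ^ n] iff [T_n(tau) = 1]
      (because [det (X ^ n - I) = 2 - 2 T_n(tau)]), and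
    - the eigenvalue 1 is geometrically double iff [X ^ n = I], i.e. iff
      [T_n(tau) = 1] and ([U_n(tau) = 0] or [X] is scalar).
    Solving [T_n(tau) = 1] gives [tau = cos (2 PI q / n)], [q <= n/2], and
    inverting the cosine in [cos (l s) = sin t * cos (2 PI q / n)] gives the
    listed values.  At these values [U_n(tau) = 0] unless [q = 0] or
    [2 q = n]; [X] is scalar iff [cos t = 0], i.e. the angle is special; and
    the value is 0 exactly in the two parity-matched special cases. *)

(** Entries of [M2] are pairs of reals, definitionally Coquelicot's complex
    numbers; these equations let us use Coquelicot's complex field. *)
Lemma Cadd_Cplus : Defs.Cadd = Cplus.
Proof. reflexivity. Qed.

Lemma Cmul_Cmult : Defs.Cmul = Cmult.
Proof. reflexivity. Qed.

(** [Cring] proves an equation between [Defs.C]-typed entries by retyping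
    it (and its variables) as an equation in Coquelicot's ring [C]. *)
Ltac Cring :=
  repeat match goal with z : Defs.C |- _ => change C in z end;
  cbn [fst snd]; change Defs.C0 with (RtoC 0); change Defs.C1 with (RtoC 1);
  match goal with |- @eq _ ?x ?y => change (@eq C x y); ring end.

Lemma Cmult_eq_0 (z1 z2 : C) : (z1 * z2 = 0)%C -> z1 = 0%C \/ z2 = 0%C.
Proof.
  intros H. apply (f_equal Cmod) in H. rewrite Cmod_mult, Cmod_0 in H.
  apply Rmult_integral in H as [H|H]; [left|right]; apply Cmod_eq_0, H.
Qed.

(** A linear form vanishing on two vectors with nonzero determinant is zero
    (Cramer's rule for a single row). *)
Lemma row_annihilates (p q v1 v2 w1 w2 : C) :
  (p * v1 + q * v2 = 0)%C -> (p * w1 + q * w2 = 0)%C ->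
  (v1 * w2 - v2 * w1 <> 0)%C -> p = 0%C /\ q = 0%C.
Proof.
  intros Hv Hw HD.
  assert (Hp : (p * (v1 * w2 - v2 * w1) = 0)%C).
  { transitivity (w2 * (p * v1 + q * v2) - v2 * (p * w1 + q * w2))%C; [ring|].
    rewrite Hv, Hw; ring. }
  assert (Hq : (q * (v1 * w2 - v2 * w1) = 0)%C).
  { transitivity (v1 * (p * w1 + q * w2) - w1 * (p * v1 + q * v2))%C; [ring|].
    rewrite Hv, Hw; ring. }
  apply Cmult_eq_0 in Hp as [Hp|Hp]; [|contradiction].
  apply Cmult_eq_0 in Hq as [Hq|Hq]; [|contradiction].
  split; assumption.
Qed.

Lemma lin_indep_det (v w : V2) :
  lin_indep v w -> (fst v * snd w - snd v * fst w <> 0)%C.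
Proof.
  destruct v as [v1 v2], w as [w1 w2]; simpl. intros Hind HD.
  unfold lin_indep, V2add, V2scale, V2zero in Hind; simpl in Hind.
  rewrite Cadd_Cplus, Cmul_Cmult in Hind. change Defs.C0 with (RtoC 0) in Hind.
  assert (Hneg : forall z : C, (- z = 0)%C -> z = 0%C).
  { intros z Hz. replace z with (- - z)%C by ring. rewrite Hz. ring. }
  destruct (Hind w2 (- v2)%C) as [-> Hv2%Hneg].
  { f_equal; [transitivity (v1 * w2 - v2 * w1)%C; [Cring|exact HD]|Cring]. }
  rewrite Hv2 in *.
  destruct (Hind w1 (- v1)%C) as [-> Hv1%Hneg]; [f_equal; Cring|].
  rewrite Hv1 in *.
  destruct (Hind (RtoC 1) (RtoC 0)) as [H10 _]; [f_equal; Cring|].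
  apply (f_equal fst) in H10; simpl in H10. lra.
Qed.

(** If [det (X - I) = 0] then [X] fixes a nonzero vector: the columns of the
    adjugate of [X - I] (up to sign [(b, 1 - a)] and [(d - 1, -c)]) are
    fixed, and one of them is nonzero unless [X = I]. *)
Lemma fixed_vector_of_det (a b c d : C) :
  ((a - 1) * (d - 1) - b * c = 0)%C ->
  exists v : V2, v <> V2zero /\ M2app (mkM2 a b c d) v = v.
Proof.
  intros HD. unfold M2app; cbn [m11 m12 m21 m22]. rewrite Cadd_Cplus, Cmul_Cmult.
  assert (Hv1 : ((a * b + b * (1 - a))%C, (c * b + d * (1 - a))%C) = (b, (1 - a)%C)).
  { f_equal; [Cring|]. transitivity (1 - a - ((a - 1) * (d - 1) - b * c))%C; [Cring|].
    rewrite HD. Cring. }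
  assert (Hv2 : ((a * (d - 1) + b * - c)%C, (c * (d - 1) + d * - c)%C) = ((d - 1)%C, (- c)%C)).
  { f_equal; [|Cring]. transitivity (d - 1 + ((a - 1) * (d - 1) - b * c))%C; [Cring|].
    rewrite HD. Cring. }
  destruct (classic ((b, (1 - a)%C) = V2zero)) as [H1|H1]; [|exists (b, (1 - a)%C); auto].
  destruct (classic (((d - 1)%C, (- c)%C) = V2zero)) as [H2|H2];
    [|exists ((d - 1)%C, (- c)%C); auto].
  (* both kernel vectors vanish, so the matrix is the identity *)
  exists (RtoC 1, RtoC 0). split.
  - intros E. apply (f_equal (fun v => fst (fst v))) in E; simpl in E; lra.
  - pose proof (f_equal snd H1) as Ha.
    pose proof (f_equal snd H2) as Hc. cbn [V2zero fst snd] in Ha, Hc.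
    f_equal.
    + transitivity (1 - (1 - a) + b * 0)%C; [Cring|]. rewrite Ha. Cring.
    + transitivity (- - c + d * 0)%C; [Cring|]. rewrite Hc. Cring.
Qed.

Lemma eig1_iff_det (X : M2) :
  eig1 X <-> ((m11 X - 1) * (m22 X - 1) - m12 X * m21 X = 0)%C.
Proof.
  destruct X as [a b c d]; unfold eig1, M2app, V2zero; simpl.
  rewrite Cadd_Cplus, Cmul_Cmult. change Defs.C0 with (RtoC 0).
  set (D := ((a - 1) * (d - 1) - b * c)%C).
  split.
  - intros [[x y] [Hnz Hfix]]; simpl in Hfix.
    injection Hfix as E1 E2.
    assert (Hx : (D * x = 0)%C).
    { transitivity ((d - 1) * (a * x + b * y - x) - b * (c * x + d * y - y))%C; [unfold D; Cring|].
      rewrite E1, E2. ring. }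
    assert (Hy : (D * y = 0)%C).
    { transitivity ((a - 1) * (c * x + d * y - y) - c * (a * x + b * y - x))%C; [unfold D; Cring|].
      rewrite E1, E2. ring. }
    destruct (Ceq_dec D 0) as [HD|HD]; [exact HD|].
    apply Cmult_eq_0 in Hx as [Hx|Hx]; [contradiction|].
    apply Cmult_eq_0 in Hy as [Hy|Hy]; [contradiction|].
    exfalso; apply Hnz; rewrite Hx, Hy; reflexivity.
  - apply fixed_vector_of_det.
Qed.

Lemma two_indep_fixed_iff (X : M2) : two_indep_fixed X <-> X = M2id.
Proof.
  split.
  - intros [v [w [Hind [Hv Hw]]]].
    pose proof (lin_indep_det v w Hind) as HD.
    destruct X as [a b c d], v as [v1 v2], w as [w1 w2].
    unfold M2app in Hv, Hw; simpl in *. rewrite Cadd_Cplus, Cmul_Cmult in Hv, Hw.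
    injection Hv as Ev1 Ev2. injection Hw as Ew1 Ew2.
    assert (Hfix : forall p q x y : C, (p * x + q * y = x)%C -> ((p - 1) * x + q * y = 0)%C).
    { intros p q x y E. transitivity (p * x + q * y - x)%C; [ring|]. rewrite E. ring. }
    assert (Hfix' : forall p q x y : C, (p * x + q * y = y)%C -> (p * x + (q - 1) * y = 0)%C).
    { intros p q x y E. transitivity (p * x + q * y - y)%C; [ring|]. rewrite E. ring. }
    (* both rows of [X - I] annihilate the basis [v, w] *)
    destruct (row_annihilates (a - 1) b v1 v2 w1 w2) as [Ha Hb]; auto.
    destruct (row_annihilates c (d - 1) v1 v2 w1 w2) as [Hc Hd]; auto.
    unfold M2id; f_equal.
    + replace a with ((a - 1) + 1)%C by Cring. rewrite Ha. Cring.
    + exact Hb.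
    + exact Hc.
    + replace d with ((d - 1) + 1)%C by Cring. rewrite Hd. Cring.
  - intros ->. exists (RtoC 1, RtoC 0), (RtoC 0, RtoC 1). split; [|split].
    + intros p q E. unfold V2add, V2scale, V2zero in E; simpl in E.
      rewrite Cadd_Cplus, Cmul_Cmult in E. injection E as Ep Eq.
      destruct p as [p1 p2], q as [q1 q2]; simpl in *.
      unfold Defs.C0; split; f_equal; lra.
    + unfold M2app, M2id; simpl. rewrite Cadd_Cplus, Cmul_Cmult. f_equal; Cring.
    + unfold M2app, M2id; simpl. rewrite Cadd_Cplus, Cmul_Cmult. f_equal; Cring.
Qed.

(** Chebyshev polynomials, computed jointly: [cheb x n = (T_n(x), U_n(x))]
    with [U_n(cos p) * sin p = sin (n p)] (so [U_n] is the classical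
    [U_(n-1)]), via [T_(n+1) = x T_n + (x^2 - 1) U_n] and
    [U_(n+1) = x U_n + T_n]. *)
Fixpoint cheb (x : R) (n : nat) : R * R :=
  match n with
  | O => (1, 0)
  | S n => let p := cheb x n in (x * fst p + (x * x - 1) * snd p, x * snd p + fst p)
  end.

Definition chebT (x : R) (n : nat) : R := fst (cheb x n).
Definition chebU (x : R) (n : nat) : R := snd (cheb x n).

Lemma chebT_S (x : R) (n : nat) :
  chebT x (S n) = x * chebT x n + (x * x - 1) * chebU x n.
Proof. reflexivity. Qed.

Lemma chebU_S (x : R) (n : nat) : chebU x (S n) = x * chebU x n + chebT x n.
Proof. reflexivity. Qed.

Lemma cheb_pell (x : R) (n : nat) :
  chebT x n * chebT x n - (x * x - 1) * (chebU x n * chebU x n) = 1.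
Proof.
  induction n as [|n IH]; [unfold chebT, chebU; simpl; ring|].
  rewrite chebT_S, chebU_S.
  transitivity (chebT x n * chebT x n - (x * x - 1) * (chebU x n * chebU x n));
    [ring|exact IH].
Qed.

Lemma cheb_cos (p : R) (n : nat) :
  chebT (cos p) n = cos (INR n * p) /\ chebU (cos p) n * sin p = sin (INR n * p).
Proof.
  induction n as [|n [IHT IHU]].
  - unfold chebT, chebU; simpl. rewrite Rmult_0_l, cos_0, sin_0. split; ring.
  - rewrite chebT_S, chebU_S, S_INR, Rmult_plus_distr_r, Rmult_1_l, cos_plus, sin_plus.
    rewrite <- IHT, <- IHU. split; [|ring].
    pose proof (sin2_cos2 p) as Hp. unfold Rsqr in Hp.
    replace (chebU (cos p) n * sin p * sin p) with (chebU (cos p) n * (1 - cos p * cos p))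
      by (rewrite <- Hp; ring).
    ring.
Qed.

Lemma cheb_ge_one (x : R) (n : nat) :
  1 <= x -> 1 <= chebT x n /\ INR n <= chebU x n.
Proof.
  intros Hx. induction n as [|n [IHT IHU]]; [unfold chebT, chebU; simpl; lra|].
  rewrite chebT_S, chebU_S, S_INR. pose proof (pos_INR n).
  assert (0 <= (x * x - 1) * chebU x n) by (apply Rmult_le_pos; nra).
  split; nra.
Qed.

Lemma cheb_opp (x : R) (n : nat) :
  chebT (- x) n = (-1) ^ n * chebT x n /\ chebU (- x) n = (-1) ^ S n * chebU x n.
Proof.
  induction n as [|n [IHT IHU]]; [unfold chebT, chebU; simpl; split; ring|].
  rewrite !chebT_S, !chebU_S, IHT, IHU. simpl. split; ring.
Qed.

Lemma chebU_nonzero (x : R) (n : nat) : 1 <= Rabs x -> (1 <= n)%nat -> chebU x n <> 0.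
Proof.
  intros Hx Hn. assert (HnR : 1 <= INR n) by (apply (le_INR 1); exact Hn).
  destruct (Rle_dec 0 x) as [Hpos|Hneg].
  - rewrite Rabs_right in Hx by lra. pose proof (cheb_ge_one x n Hx). lra.
  - rewrite Rabs_left in Hx by lra.
    replace x with (- - x) by ring. rewrite (proj2 (cheb_opp (- x) n)).
    pose proof (cheb_ge_one (- x) n Hx).
    apply Rmult_integral_contrapositive. split; [apply pow_nonzero|]; lra.
Qed.

Fixpoint Mpow (X : M2) (n : nat) : M2 :=
  match n with O => M2id | S n => M2mul X (Mpow X n) end.

Definition M2tr (X : M2) : C := (m11 X + m22 X)%C.
Definition M2det (X : M2) : C := (m11 X * m22 X - m12 X * m21 X)%C.

(** [cheb_form X x T U = T I + U (X - x I)], the shape of every power of a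
    unimodular matrix with trace [2 x]. *)
Definition cheb_form (X : M2) (x T U : R) : M2 :=
  mkM2 (T + U * (m11 X - x))%C (U * m12 X)%C (U * m21 X)%C (T + U * (m22 X - x))%C.

(** Cayley-Hamilton: [X ^ n = T_n(x) I + U_n(x) (X - x I)] when [tr X = 2 x]
    and [det X = 1]. *)
Lemma Mpow_cheb (X : M2) (x : R) (n : nat) :
  M2tr X = RtoC (2 * x) -> M2det X = RtoC 1 ->
  Mpow X n = cheb_form X x (chebT x n) (chebU x n).
Proof.
  destruct X as [a b c d]; unfold M2tr, M2det, cheb_form; simpl. intros Htr Hdet.
  assert (Hd : d = (2 * x - a)%C).
  { transitivity (a + d - a)%C; [Cring|]. rewrite Htr, RtoC_mult. Cring. }
  assert (Hbc : (b * c = a * (2 * x - a) - 1)%C).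
  { rewrite <- Hd. transitivity (a * d - (a * d - b * c))%C; [Cring|]. rewrite Hdet. Cring. }
  induction n as [|n IH].
  - simpl; unfold M2id, chebT, chebU; simpl. f_equal; Cring.
  - simpl Mpow. rewrite IH. unfold M2mul; cbn [m11 m12 m21 m22].
    rewrite Cadd_Cplus, Cmul_Cmult, chebT_S, chebU_S.
    repeat (rewrite RtoC_plus || rewrite RtoC_minus || rewrite RtoC_mult).
    subst d. f_equal; [| Cring | Cring |];
      [replace (b * (chebU x n * c))%C with (chebU x n * (b * c))%C by Cring
      |replace (c * (chebU x n * b))%C with (chebU x n * (b * c))%C by Cring];
      rewrite Hbc; Cring.
Qed.

Lemma cheb_form_shift_det (X : M2) (x T U : R) :
  M2tr X = RtoC (2 * x) -> M2det X = RtoC 1 ->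
  let Y := cheb_form X x T U in
  ((m11 Y - 1) * (m22 Y - 1) - m12 Y * m21 Y)%C
  = RtoC ((T - 1) * (T - 1) - (x * x - 1) * (U * U)).
Proof.
  destruct X as [a b c d]; unfold M2tr, M2det, cheb_form; simpl. intros Htr Hdet.
  repeat (rewrite RtoC_plus || rewrite RtoC_minus || rewrite RtoC_mult).
  transitivity ((T - 1) * (T - 1) + (T - 1) * U * (a + d - 2 * x)
                + U * U * ((a * d - b * c) - x * (a + d - 2 * x) - x * x))%C; [Cring|].
  rewrite Htr, Hdet, RtoC_mult. Cring.
Qed.

(** 1 is an eigenvalue of [X ^ n] iff [T_n(x) = 1]: by Pell, the determinant
    above is [2 - 2 T_n(x)]. *)
Lemma eig1_Mpow (X : M2) (x : R) (n : nat) :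
  M2tr X = RtoC (2 * x) -> M2det X = RtoC 1 ->
  eig1 (Mpow X n) <-> chebT x n = 1.
Proof.
  intros Htr Hdet. rewrite (Mpow_cheb X x n Htr Hdet), eig1_iff_det.
  rewrite (cheb_form_shift_det X x _ _ Htr Hdet).
  pose proof (cheb_pell x n) as Hpell.
  split.
  - intros H. apply RtoC_inj in H. nra.
  - intros HT. rewrite HT in *. f_equal. nra.
Qed.

Definition M2scalar (x : R) : M2 := mkM2 (RtoC x) (RtoC 0) (RtoC 0) (RtoC x).

(** The eigenvalue 1 of [X ^ n] is double iff [X ^ n = I], i.e. iff
    [T_n(x) = 1] and either [U_n(x) = 0] or [X = x I]. *)
Lemma two_indep_fixed_Mpow (X : M2) (x : R) (n : nat) :
  M2tr X = RtoC (2 * x) -> M2det X = RtoC 1 ->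
  two_indep_fixed (Mpow X n) <-> chebT x n = 1 /\ (chebU x n = 0 \/ X = M2scalar x).
Proof.
  intros Htr Hdet. rewrite two_indep_fixed_iff, (Mpow_cheb X x n Htr Hdet).
  set (T := chebT x n); set (U := chebU x n).
  destruct X as [a b c d]; unfold M2tr, M2det, cheb_form, M2scalar, M2id in *; simpl in *.
  change Defs.C0 with (RtoC 0); change Defs.C1 with (RtoC 1).
  assert (Hd : d = (2 * x - a)%C).
  { transitivity (a + d - a)%C; [Cring|]. rewrite Htr, RtoC_mult. Cring. }
  subst d. split.
  - intros E.
    pose proof (f_equal m11 E) as E11; pose proof (f_equal m12 E) as E12.
    pose proof (f_equal m21 E) as E21; pose proof (f_equal m22 E) as E22; simpl in *.
    assert (HT : T = 1).
    { assert (H2T : RtoC (2 * T) = RtoC 2).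
      { rewrite RtoC_mult. transitivity (T + U * (a - x) + (T + U * (2 * x - a - x)))%C; [Cring|].
        rewrite E11, E22. Cring. }
      apply RtoC_inj in H2T. lra. }
    split; [exact HT|].
    destruct (Req_dec U 0) as [HU|HU]; [left; exact HU|right].
    assert (HUC : RtoC U <> 0%C) by (intros H; apply HU, RtoC_inj, H).
    assert (Hzero : forall z : C, (U * z = 0)%C -> z = 0%C).
    { intros z Hz. apply Cmult_eq_0 in Hz as [Hz|Hz]; [contradiction|exact Hz]. }
    assert (Ha : (a - x = 0)%C).
    { apply Hzero. transitivity (T + U * (a - x) - T)%C; [Cring|]. rewrite E11, HT. Cring. }
    assert (Ha' : a = RtoC x) by (transitivity (a - x + x)%C; [Cring|rewrite Ha; Cring]).
    rewrite Ha'. f_equal; [apply Hzero; exact E12 | apply Hzero; exact E21 | Cring].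
  - intros [HT [HU | E]].
    + rewrite HT, HU. f_equal; Cring.
    + injection E as Ea Eb Ec Ed. rewrite HT, Ea, Eb, Ec. f_equal; Cring.
Qed.

(** The phases [2 PI q / n]; for [q <= n/2] they lie in [[0, PI]], and they
    are the solutions of [T_n(cos p) = 1]. *)
Definition qphase (n q : nat) : R := 2 * PI * INR q / INR n.

(** [q <= n/2] and [2 q = n] in terms without division. *)
Lemma le_half (n q : nat) : (q <= n / 2)%nat <-> (2 * q <= n)%nat.
Proof. pose proof (Nat.div_mod_eq n 2); pose proof (Nat.mod_upper_bound n 2); split; lia. Qed.

Lemma half_eq (n q : nat) : (Nat.Even n /\ q = n / 2)%nat <-> (2 * q = n)%nat.
Proof.
  pose proof (Nat.div_mod_eq n 2); pose proof (Nat.mod_upper_bound n 2).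
  split; [intros [[j Hj] Hq]; lia | intros H2q; split; [exists q|]; lia].
Qed.

Lemma qphase_mul (n q : nat) : (1 <= n)%nat -> INR n * qphase n q = 2 * PI * INR q.
Proof.
  intros Hn. assert (0 < INR n) by (apply lt_0_INR; lia). unfold qphase. field. lra.
Qed.

Lemma qphase_range (n q : nat) :
  (1 <= n)%nat -> (q <= n / 2)%nat -> 0 <= qphase n q <= PI.
Proof.
  intros Hn Hq. pose proof PI_RGT_0. pose proof (pos_INR q).
  assert (HnR : 0 < INR n) by (apply lt_0_INR; lia).
  assert (H2q : 2 * INR q <= INR n).
  { replace 2 with (INR 2) by reflexivity. rewrite <- mult_INR. apply le_INR, le_half, Hq. }
  unfold qphase. split.
  - apply Rmult_le_pos; [nra|left; apply Rinv_0_lt_compat, HnR].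
  - apply Rmult_le_reg_r with (INR n); [exact HnR|].
    replace (2 * PI * INR q / INR n * INR n) with (PI * (2 * INR q)) by (field; lra). nra.
Qed.

Lemma cos_qphase_one_iff (n q : nat) :
  (1 <= n)%nat -> (q <= n / 2)%nat -> cos (qphase n q) = 1 <-> q = 0%nat.
Proof.
  intros Hn Hq. split.
  - intros Hc. apply INR_eq. pose proof PI_RGT_0.
    assert (H0 : qphase n q = 0).
    { rewrite <- (acos_cos _ (qphase_range n q Hn Hq)), Hc. apply acos_1. }
    pose proof (qphase_mul n q Hn) as E. rewrite H0 in E. simpl. nra.
  - intros ->. unfold qphase. simpl. unfold Rdiv. rewrite !Rmult_0_r, Rmult_0_l. apply cos_0.
Qed.

Lemma cos_qphase_mone_iff (n q : nat) :
  (1 <= n)%nat -> (q <= n / 2)%nat -> cos (qphase n q) = -1 <-> (2 * q = n)%nat.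
Proof.
  intros Hn Hq. split.
  - intros Hc. apply INR_eq. pose proof PI_RGT_0.
    assert (HPI : qphase n q = PI).
    { rewrite <- (acos_cos _ (qphase_range n q Hn Hq)), Hc.
      replace (-1) with (- (1)) by ring. rewrite acos_opp, acos_1. ring. }
    pose proof (qphase_mul n q Hn) as E. rewrite HPI in E. rewrite mult_INR. simpl INR. nra.
  - intros H2q. replace (qphase n q) with PI; [apply cos_PI|].
    assert (HqR : 0 < INR q) by (apply lt_0_INR; lia).
    unfold qphase. rewrite <- H2q, mult_INR. simpl INR. field. lra.
Qed.

Lemma sin_qphase_zero_iff (n q : nat) :
  (1 <= n)%nat -> (q <= n / 2)%nat ->
  sin (qphase n q) = 0 <-> (q = 0 \/ 2 * q = n)%nat.
Proof.
  intros Hn Hq. rewrite <- (cos_qphase_one_iff n q Hn Hq), <- (cos_qphase_mone_iff n q Hn Hq).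
  pose proof (sin2_cos2 (qphase n q)) as E. unfold Rsqr in E.
  split; [intros Hs; rewrite Hs in E; nra|].
  intros [Hc|Hc]; rewrite Hc in E; nra.
Qed.

Lemma IZR_nonneg_INR (k : Z) : (0 <= k)%Z -> IZR k = INR (Z.to_nat k).
Proof. intros H. rewrite INR_IZR_INZ, Z2Nat.id; auto. Qed.

Lemma cos_eq_one_period (y : R) : cos y = 1 -> exists k : Z, y = 2 * PI * IZR k.
Proof.
  intros H. replace y with (2 * (y / 2)) in H by field.
  rewrite cos_2a_sin in H.
  destruct (sin_eq_0_0 (y / 2)) as [k Hk]; [nra|]. exists k. lra.
Qed.

Lemma angle_of_cos_mult_one (n : nat) (p : R) :
  (1 <= n)%nat -> 0 <= p <= PI -> cos (INR n * p) = 1 ->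
  exists q : nat, (q <= n / 2)%nat /\ p = qphase n q.
Proof.
  intros Hn Hp Hc. pose proof PI_RGT_0.
  assert (HnR : 0 < INR n) by (apply lt_0_INR; lia).
  destruct (cos_eq_one_period _ Hc) as [z Hz].
  assert (Hz0 : (0 <= z)%Z) by (apply le_IZR; nra).
  rewrite (IZR_nonneg_INR z Hz0) in Hz. set (q := Z.to_nat z) in *.
  exists q. split.
  - apply le_half, INR_le. rewrite mult_INR. simpl INR. nra.
  - unfold qphase. rewrite <- Hz. field. lra.
Qed.

Lemma chebT_eq_one_iff (n : nat) (x : R) :
  (1 <= n)%nat ->
  chebT x n = 1 <-> exists q : nat, (q <= n / 2)%nat /\ x = cos (qphase n q).
Proof.
  intros Hn. split.
  - intros HT.
    assert (Hx : -1 <= x <= 1).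
    { destruct (Rlt_dec 1 (Rabs x)) as [Habs|Habs];
        [|unfold Rabs in Habs; destruct Rcase_abs; lra].
      exfalso. pose proof (chebU_nonzero x n ltac:(lra) Hn) as HU.
      pose proof (cheb_pell x n) as Hpell. rewrite HT in Hpell.
      assert (Hx2 : (x * x - 1) * (chebU x n * chebU x n) = 0) by lra.
      apply Rmult_integral in Hx2 as [Hx2|Hx2].
      - unfold Rabs in Habs; destruct Rcase_abs; nra.
      - apply HU. nra. }
    rewrite <- (cos_acos x Hx), (proj1 (cheb_cos (acos x) n)) in HT.
    destruct (angle_of_cos_mult_one n (acos x) Hn (acos_bound x) HT) as [q [Hq Hpq]].
    exists q. split; [exact Hq|]. rewrite <- Hpq. symmetry. apply cos_acos, Hx.
  - intros [q [Hq ->]]. rewrite (proj1 (cheb_cos _ n)), qphase_mul by exact Hn.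
    replace (2 * PI * INR q) with (0 + 2 * INR q * PI) by ring. rewrite cos_period. apply cos_0.
Qed.

Lemma chebU_cos_zero_iff (n : nat) (p : R) :
  (1 <= n)%nat -> sin (INR n * p) = 0 -> chebU (cos p) n = 0 <-> sin p <> 0.
Proof.
  intros Hn Hnp. split.
  - intros HU Hs. apply (chebU_nonzero (cos p) n); [|exact Hn|exact HU].
    pose proof (sin2_cos2 p) as E. unfold Rsqr in E. rewrite Hs in E.
    unfold Rabs; destruct Rcase_abs; nra.
  - intros Hs. pose proof (proj2 (cheb_cos p n)) as E. rewrite Hnp in E.
    apply Rmult_integral in E as [E|E]; [exact E|contradiction].
Qed.

Lemma chebU_qphase_zero_iff (n q : nat) :
  (1 <= n)%nat -> (q <= n / 2)%nat ->
  chebU (cos (qphase n q)) n = 0 <-> ~ (q = 0 \/ 2 * q = n)%nat.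
Proof.
  intros Hn Hq. rewrite <- (sin_qphase_zero_iff n q Hn Hq).
  apply chebU_cos_zero_iff; [exact Hn|]. rewrite qphase_mul by exact Hn.
  replace (2 * PI * INR q) with (INR (2 * q) * PI) by (rewrite mult_INR; simpl; ring).
  apply sin_eq_0_1. exists (Z.of_nat (2 * q)). rewrite INR_IZR_INZ. reflexivity.
Qed.

Lemma cos_eq_iff_acos_branch (th x : R) :
  0 <= th -> -1 <= x <= 1 ->
  cos th = x <->
  exists (sgn : R) (m : nat), (sgn = 1 \/ sgn = -1) /\ th = sgn * acos x + 2 * PI * INR m.
Proof.
  intros Hth Hx. pose proof PI_RGT_0. split.
  - intros Hc.
    (* reduce [th] modulo [2 PI] to [r] in [0, 2 PI) *)
    destruct (base_Int_part (th / (2 * PI))) as [B1 B2].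
    set (k := Int_part (th / (2 * PI))) in *.
    assert (Hq : 0 <= th / (2 * PI)).
    { unfold Rdiv; apply Rmult_le_pos; [lra|left; apply Rinv_0_lt_compat; lra]. }
    assert (Hk : (0 <= k)%Z) by (assert (Hk1 : (-1 < k)%Z) by (apply lt_IZR; lra); lia).
    rewrite (IZR_nonneg_INR k Hk) in B1, B2. set (m := Z.to_nat k) in *.
    set (r := th - 2 * PI * INR m).
    assert (Hdiv : th / (2 * PI) * (2 * PI) = th) by (field; lra).
    assert (Hr : 0 <= r < 2 * PI) by (unfold r; split; nra).
    assert (Hcr : cos r = x).
    { rewrite <- Hc. replace th with (r + 2 * INR m * PI) by (unfold r; ring).
      symmetry. apply cos_period. }
    destruct (Rle_dec r PI) as [HrPI|HrPI].
    + exists 1, m. split; [left; reflexivity|].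
      rewrite <- Hcr, acos_cos by lra. unfold r; ring.
    + exists (-1), (S m). split; [right; reflexivity|].
      assert (Hcr' : cos (2 * PI - r) = x).
      { rewrite <- Hcr, <- (cos_neg r), <- (cos_period (- r) 1).
        f_equal. simpl. ring. }
      rewrite <- Hcr', acos_cos by lra. rewrite S_INR. unfold r; ring.
  - intros [sgn [m [Hsgn ->]]].
    replace (sgn * acos x + 2 * PI * INR m) with (sgn * acos x + 2 * INR m * PI) by ring.
    rewrite cos_period.
    destruct Hsgn as [-> | ->].
    + rewrite Rmult_1_l. apply cos_acos, Hx.
    + replace (-1 * acos x) with (- acos x) by ring. rewrite cos_neg. apply cos_acos, Hx.
Qed.

Lemma acos_branch_zero_iff (sgn x : R) (m : nat) :
  (sgn = 1 \/ sgn = -1) -> -1 <= x <= 1 ->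
  sgn * acos x + 2 * PI * INR m = 0 <-> m = 0%nat /\ x = 1.
Proof.
  intros Hsgn Hx. pose proof PI_RGT_0. pose proof (acos_bound x) as HA. split.
  - intros H0.
    assert (Hm : m = 0%nat).
    { destruct m as [|m]; [reflexivity|]. exfalso. rewrite S_INR in H0.
      pose proof (pos_INR m). destruct Hsgn as [-> | ->]; nra. }
    subst m. split; [reflexivity|].
    assert (HA0 : acos x = 0) by (simpl in H0; destruct Hsgn as [-> | ->]; lra).
    rewrite <- (cos_acos x Hx), HA0. apply cos_0.
  - intros [-> ->]. rewrite acos_1. simpl. ring.
Qed.

Lemma unit_product_iff (u v : R) :
  -1 <= u <= 1 -> -1 <= v <= 1 -> u * v = 1 <-> (u = 1 /\ v = 1) \/ (u = -1 /\ v = -1).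
Proof.
  intros Hu Hv. split; [|intros [[-> ->]|[-> ->]]; ring].
  intros H. destruct (Rle_dec 0 u); [left|right]; split; nra.
Qed.

Lemma sin_cos_bound (u v : R) : -1 <= sin u * cos v <= 1.
Proof. pose proof (SIN_bound u). pose proof (COS_bound v). split; nra. Qed.

(** Exceptional angles are
    exactly those with [sin t = 0], special ones those with [cos t = 0],
    and the parity of a special angle is the sign of [sin t]. *)
Definition twist (a : R) : R := PI ^ 2 / (2 * a).

Lemma cos_nat_PI (k : nat) : cos (INR k * PI) = (-1) ^ k.
Proof.
  induction k as [|k IH]; [simpl; rewrite Rmult_0_l; apply cos_0|].
  rewrite S_INR, Rmult_plus_distr_r, Rmult_1_l, neg_cos, IH. simpl. ring.
Qed.

Section Twist.
Variable a : R.
Hypothesis Ha : 0 < a < PI.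

(** Since [a < PI], [t > PI/2]; this pins down the integers [k] in
    [t = k PI] and [t = k PI + PI/2] as positive. *)
Lemma twist_gt : PI / 2 < twist a.
Proof.
  unfold twist. pose proof PI_RGT_0.
  replace (PI ^ 2 / (2 * a)) with (PI / 2 * (PI / a)) by (field; lra).
  assert (1 < PI / a) by (apply Rmult_lt_reg_r with a; [lra|]; field_simplify; lra).
  nra.
Qed.

Lemma sin_twist_nonzero : ~ exceptional a -> sin (twist a) <> 0.
Proof.
  intros Hne Hs. apply Hne. pose proof PI_RGT_0. pose proof twist_gt.
  destruct (sin_eq_0_0 _ Hs) as [k Hk].
  assert (Hk0 : (0 < k)%Z) by (apply lt_IZR; nra).
  exists (Z.to_nat k). split; [lia|].
  rewrite <- IZR_nonneg_INR by lia.
  assert (E : IZR k = PI / (2 * a)).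
  { apply Rmult_eq_reg_r with PI; [|lra]. rewrite <- Hk. unfold twist. field. lra. }
  rewrite E. field. lra.
Qed.

Lemma twist_special (k : nat) : a = PI / (2 * INR k + 1) -> twist a = INR k * PI + PI / 2.
Proof.
  intros ->. unfold twist. pose proof PI_RGT_0. pose proof (pos_INR k). field. lra.
Qed.

Lemma cos_twist_zero_iff : cos (twist a) = 0 <-> special a.
Proof.
  pose proof PI_RGT_0. split.
  - intros Hc. pose proof twist_gt.
    destruct (cos_eq_0_0 _ Hc) as [k Hk].
    assert (Hk0 : (0 < k)%Z) by (apply lt_IZR; nra).
    exists (Z.to_nat k). split; [lia|].
    rewrite <- IZR_nonneg_INR by lia.
    assert (E : IZR k = PI / (2 * a) - 1 / 2).
    { apply Rmult_eq_reg_r with PI; [|lra].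
      replace (IZR k * PI) with (twist a - PI / 2) by lra. unfold twist. field. lra. }
    rewrite E. field. lra.
  - intros [k [_ Hk]]. rewrite (twist_special k Hk). apply cos_eq_0_1.
    exists (Z.of_nat k). rewrite INR_IZR_INZ. reflexivity.
Qed.

Lemma sin_twist_special (k : nat) :
  a = PI / (2 * INR k + 1) -> sin (twist a) = (-1) ^ k.
Proof.
  intros Hk. rewrite (twist_special k Hk), sin_plus, sin_PI2, cos_PI2, cos_nat_PI. ring.
Qed.

Lemma sin_twist_one_iff : sin (twist a) = 1 <-> special_even a.
Proof.
  split.
  - intros Hs. assert (Hc : cos (twist a) = 0).
    { pose proof (sin2_cos2 (twist a)) as E. unfold Rsqr in E. rewrite Hs in E. nra. }
    destruct (proj1 cos_twist_zero_iff Hc) as [k [Hk1 Hk]].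
    destruct (Nat.Even_or_Odd k) as [He|[j ->]]; [exists k; auto|].
    exfalso. rewrite (sin_twist_special _ Hk), Nat.add_1_r, pow_1_odd in Hs. lra.
  - intros [k [_ [[j ->] Hk]]]. rewrite (sin_twist_special _ Hk). apply pow_1_even.
Qed.

Lemma sin_twist_mone_iff : sin (twist a) = -1 <-> special_odd a.
Proof.
  split.
  - intros Hs. assert (Hc : cos (twist a) = 0).
    { pose proof (sin2_cos2 (twist a)) as E. unfold Rsqr in E. rewrite Hs in E. nra. }
    destruct (proj1 cos_twist_zero_iff Hc) as [k [Hk1 Hk]].
    destruct (Nat.Even_or_Odd k) as [[j ->]|Ho]; [|exists k; auto].
    exfalso. rewrite (sin_twist_special _ Hk), pow_1_even in Hs. lra.
  - intros [k [_ [[j ->] Hk]]]. rewrite (sin_twist_special _ Hk), Nat.add_1_r. apply pow_1_odd.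
Qed.

End Twist.

Lemma Tmat_qreg (n : nat) (a l s : R) :
  Tmat (qreg n a l) s = Mpow (M2mul (Amat a) (Bmat l s)) n.
Proof.
  unfold Tmat, qreg. induction n as [|n IH]; [reflexivity|].
  change (repeat (a, l) (S n)) with ((a, l) :: repeat (a, l) n).
  rewrite repeat_cons, fold_left_app, IH. reflexivity.
Qed.

Lemma vertex_matrix_entries (a l s : R) :
  let c := csc (twist a) in let d := cot (twist a) in let th := l * s in
  M2mul (Amat a) (Bmat l s) =
  mkM2 (c * cos th, c * sin th) (- (d * sin th), - (d * cos th))
       (- (d * sin th), d * cos th) (c * cos th, - (c * sin th)).
Proof.
  unfold Amat, Bmat, M2mul, Cexpi, Defs.RtoC, Defs.C0, Defs.Cadd, Defs.Cmul, twist; simpl.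
  rewrite cos_neg, sin_neg. f_equal; f_equal; ring.
Qed.

Section VertexMatrix.
Variables a l s : R.
Hypothesis Hsin : sin (twist a) <> 0.
Let X := M2mul (Amat a) (Bmat l s).
Let tau := csc (twist a) * cos (l * s).

Lemma vertex_matrix_tr : M2tr X = RtoC (2 * tau).
Proof.
  unfold X, tau. rewrite vertex_matrix_entries. unfold M2tr, Cplus, RtoC; simpl.
  f_equal; ring.
Qed.

Lemma vertex_matrix_det : M2det X = RtoC 1.
Proof.
  unfold X. rewrite vertex_matrix_entries. unfold M2det, Cminus, Cplus, Copp, Cmult, RtoC; simpl.
  pose proof (sin2_cos2 (l * s)) as E1. pose proof (sin2_cos2 (twist a)) as E2.
  unfold Rsqr, csc, cot in *. f_equal; [|ring].
  field_simplify_eq; [|exact Hsin]. nra.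
Qed.

Lemma vertex_matrix_scalar_iff :
  X = M2scalar tau <-> cos (twist a) = 0 /\ sin (l * s) = 0.
Proof.
  unfold X, tau. rewrite vertex_matrix_entries. unfold M2scalar, RtoC, csc, cot.
  pose proof (sin2_cos2 (l * s)) as E. unfold Rsqr in E.
  split.
  - intros H.
    pose proof (f_equal (fun Y => snd (m11 Y)) H) as Hu.
    pose proof (f_equal (fun Y => fst (m12 Y)) H) as Hw1.
    pose proof (f_equal (fun Y => snd (m12 Y)) H) as Hw2. simpl in Hu, Hw1, Hw2.
    assert (Hth : sin (l * s) = 0).
    { apply Rmult_integral in Hu as [Hu|Hu]; [|exact Hu].
      exfalso. unfold Rdiv in Hu. rewrite Rmult_1_l in Hu.
      revert Hu. apply Rinv_neq_0_compat, Hsin. }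
    split; [|exact Hth].
    set (d := cos (twist a) / sin (twist a)) in *.
    assert (Hd : d = 0) by nra.
    replace (cos (twist a)) with (d * sin (twist a)) by (unfold d; field; exact Hsin).
    rewrite Hd. ring.
  - intros [Hc Hth]. rewrite Hc, Hth. f_equal; f_equal; field; exact Hsin.
Qed.

End VertexMatrix.

Lemma quasi_eig_qreg_iff (n : nat) (a l s : R) :
  sin (twist a) <> 0 ->
  quasi_eig (qreg n a l) s <-> 0 <= s /\ chebT (csc (twist a) * cos (l * s)) n = 1.
Proof.
  intros Hsin. unfold quasi_eig. rewrite Tmat_qreg.
  rewrite (eig1_Mpow _ _ n (vertex_matrix_tr a l s) (vertex_matrix_det a l s Hsin)).
  reflexivity.
Qed.

Lemma two_indep_fixed_qreg_iff (n : nat) (a l s : R) :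
  sin (twist a) <> 0 ->
  let tau := csc (twist a) * cos (l * s) in
  two_indep_fixed (Tmat (qreg n a l) s) <->
  chebT tau n = 1 /\ (chebU tau n = 0 \/ (cos (twist a) = 0 /\ sin (l * s) = 0)).
Proof.
  intros Hsin tau. rewrite Tmat_qreg.
  rewrite (two_indep_fixed_Mpow _ _ n (vertex_matrix_tr a l s) (vertex_matrix_det a l s Hsin)).
  rewrite (vertex_matrix_scalar_iff a l s Hsin). reflexivity.
Qed.

Lemma qreg_value_scaled (n : nat) (a l sgn : R) (m q : nat) :
  0 < l ->
  l * qreg_value n a l sgn m q
  = sgn * acos (sin (twist a) * cos (qphase n q)) + 2 * PI * INR m.
Proof. intros Hl. unfold qreg_value, twist, qphase. field. lra. Qed.

Lemma quasi_eig_qreg_values (n : nat) (a l s : R) :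
  (1 <= n)%nat -> sin (twist a) <> 0 -> 0 < l ->
  quasi_eig (qreg n a l) s <->
  exists (sgn : R) (m q : nat),
    (sgn = 1 \/ sgn = -1) /\ (q <= n / 2)%nat /\ s = qreg_value n a l sgn m q /\ 0 <= s.
Proof.
  intros Hn Hsin Hl. rewrite (quasi_eig_qreg_iff n a l s Hsin).
  assert (Hcsc : forall y z, csc (twist a) * y = z <-> y = sin (twist a) * z).
  { intros y z. unfold csc. split; [intros <-|intros ->]; field; exact Hsin. }
  split.
  - intros [Hs HT]. apply (chebT_eq_one_iff n _ Hn) in HT as [q [Hq Hx]].
    apply Hcsc in Hx.
    apply (cos_eq_iff_acos_branch (l * s)) in Hx as [sgn [m [Hsgn Hth]]];
      [|apply Rmult_le_pos; lra|apply sin_cos_bound].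
    exists sgn, m, q. repeat split; auto.
    apply Rmult_eq_reg_l with l; [|lra]. rewrite qreg_value_scaled by exact Hl. exact Hth.
  - intros [sgn [m [q [Hsgn [Hq [-> Hs]]]]]]. split; [exact Hs|].
    apply (chebT_eq_one_iff n _ Hn). exists q. split; [exact Hq|]. apply Hcsc.
    apply cos_eq_iff_acos_branch; [apply Rmult_le_pos; lra|apply sin_cos_bound|].
    exists sgn, m. split; [exact Hsgn|]. apply qreg_value_scaled, Hl.
Qed.

Lemma qreg_value_zero_iff (n : nat) (a l sgn : R) (m q : nat) :
  (1 <= n)%nat -> 0 < a < PI -> 0 < l -> (sgn = 1 \/ sgn = -1) -> (q <= n / 2)%nat ->
  qreg_value n a l sgn m q = 0 <->
  m = 0%nat /\ ((special_even a /\ q = 0%nat) \/ (special_odd a /\ (2 * q = n)%nat)).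
Proof.
  intros Hn Ha Hl Hsgn Hq.
  assert (Hval : qreg_value n a l sgn m q = 0 <->
                 m = 0%nat /\ sin (twist a) * cos (qphase n q) = 1).
  { rewrite <- (acos_branch_zero_iff sgn _ m Hsgn (sin_cos_bound _ _)),
      <- (qreg_value_scaled n a l sgn m q Hl).
    split; [intros ->; ring|intros H; apply Rmult_integral in H as [H|H]; [lra|exact H]]. }
  rewrite Hval, unit_product_iff by (apply SIN_bound || apply COS_bound).
  rewrite (sin_twist_one_iff a Ha), (sin_twist_mone_iff a Ha),
    (cos_qphase_one_iff n q Hn Hq), (cos_qphase_mone_iff n q Hn Hq).
  tauto.
Qed.

Lemma mult_one_case_iff (n : nat) (a l sgn : R) (m q : nat) :
  (1 <= n)%nat -> 0 < a < PI -> 0 < l -> (sgn = 1 \/ sgn = -1) -> (q <= n / 2)%nat ->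
  mult_one_case n a m q <->
  qreg_value n a l sgn m q = 0 \/ ((q = 0 \/ 2 * q = n)%nat /\ ~ special a).
Proof.
  intros Hn Ha Hl Hsgn Hq.
  rewrite (qreg_value_zero_iff n a l sgn m q Hn Ha Hl Hsgn Hq).
  assert (He : special_even a -> special a) by (intros [k [? [_ ?]]]; exists k; auto).
  assert (Ho : special_odd a -> special a) by (intros [k [? [_ ?]]]; exists k; auto).
  unfold mult_one_case. rewrite <- (and_assoc (Nat.Even n) (q = n / 2)%nat), !half_eq.
  tauto.
Qed.

Lemma two_indep_fixed_qreg_value (n : nat) (a l sgn : R) (m q : nat) :
  (1 <= n)%nat -> 0 < a < PI -> ~ exceptional a -> 0 < l ->
  (sgn = 1 \/ sgn = -1) -> (q <= n / 2)%nat -> 0 <= qreg_value n a l sgn m q ->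
  two_indep_fixed (Tmat (qreg n a l) (qreg_value n a l sgn m q)) <->
  ~ ((q = 0 \/ 2 * q = n)%nat /\ ~ special a).
Proof.
  intros Hn Ha Hne Hl Hsgn Hq Hs.
  pose proof (sin_twist_nonzero a Ha Hne) as Hsin.
  set (s := qreg_value n a l sgn m q) in *.
  assert (Hcos : cos (l * s) = sin (twist a) * cos (qphase n q)).
  { apply cos_eq_iff_acos_branch; [apply Rmult_le_pos; lra|apply sin_cos_bound|].
    exists sgn, m. split; [exact Hsgn|]. apply qreg_value_scaled, Hl. }
  assert (Htau : csc (twist a) * cos (l * s) = cos (qphase n q)).
  { rewrite Hcos. unfold csc. field. exact Hsin. }
  rewrite (two_indep_fixed_qreg_iff n a l s Hsin); cbv zeta. rewrite Htau.
  rewrite (chebU_qphase_zero_iff n q Hn Hq), (cos_twist_zero_iff a Ha).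
  assert (HT : chebT (cos (qphase n q)) n = 1) by (apply (chebT_eq_one_iff n _ Hn); eauto).
  split.
  - intros [_ [HB | [Hsp _]]] [HB' Hnsp]; contradiction.
  - intros Hnot. split; [exact HT|].
    destruct (classic (q = 0 \/ 2 * q = n)%nat) as [HB|HB]; [right|left; exact HB].
    destruct (classic (special a)) as [Hsp|Hsp]; [|exfalso; tauto].
    split; [exact Hsp|].
    (* on a special angle and a boundary phase, cos (l s) = sin t cos phi = +-1 *)
    pose proof (proj2 (cos_twist_zero_iff a Ha) Hsp) as Hct.
    pose proof (sin2_cos2 (twist a)) as Et. pose proof (sin2_cos2 (l * s)) as Es.
    pose proof (sin2_cos2 (qphase n q)) as Ep.
    rewrite <- (sin_qphase_zero_iff n q Hn Hq) in HB.
    unfold Rsqr in *. rewrite Hct in Et. rewrite HB in Ep. rewrite Hcos in Es.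
    replace (sin (twist a) * cos (qphase n q) * (sin (twist a) * cos (qphase n q)))
      with ((sin (twist a) * sin (twist a)) * (cos (qphase n q) * cos (qphase n q))) in Es by ring.
    replace (sin (twist a) * sin (twist a)) with 1 in Es by lra.
    replace (cos (qphase n q) * cos (qphase n q)) with 1 in Es by lra.
    nra.
Qed.

Theorem proposition1p10 (n : nat) (a l : R) :
  (1 <= n)%nat -> 0 < a < PI -> ~ exceptional a -> 0 < l ->
  (forall s : R,
     quasi_eig (qreg n a l) s <->
     exists (sgn : R) (m q : nat),
       (sgn = 1 \/ sgn = -1) /\ (q <= n / 2)%nat /\
       s = qreg_value n a l sgn m q /\ 0 <= s) /\
  (forall (sgn : R) (m q : nat),
     (sgn = 1 \/ sgn = -1) -> (q <= n / 2)%nat ->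
     0 <= qreg_value n a l sgn m q ->
     (mult_one_case n a m q -> qe_mult (qreg n a l) (qreg_value n a l sgn m q) 1%nat) /\
     (~ mult_one_case n a m q -> qe_mult (qreg n a l) (qreg_value n a l sgn m q) 2%nat)).
Proof.
  intros Hn Ha Hne Hl.
  pose proof (sin_twist_nonzero a Ha Hne) as Hsin.
  split; [intros s; exact (quasi_eig_qreg_values n a l s Hn Hsin Hl)|].
  intros sgn m q Hsgn Hq Hs.
  set (s := qreg_value n a l sgn m q) in *.
  assert (Hqe : quasi_eig (qreg n a l) s).
  { apply (quasi_eig_qreg_values n a l s Hn Hsin Hl). exists sgn, m, q. auto. }
  rewrite (mult_one_case_iff n a l sgn m q Hn Ha Hl Hsgn Hq); fold s.
  pose proof (two_indep_fixed_qreg_value n a l sgn m q Hn Ha Hne Hl Hsgn Hq Hs) as Htwo.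
  fold s in Htwo.
  split.
  - intros Hone. split; [exact Hqe|]. split; [reflexivity|].
    intros Hpos. split; [apply Hqe|]. rewrite Htwo.
    destruct Hone as [Hz|HB]; [lra|tauto].
  - intros Hnot. split; [exact Hqe|]. split; [intros Hz; exfalso; tauto|].
    intros _. simpl. apply Htwo. tauto.
Qed.
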